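(* Let $n\ge3$ and let $\mathcal{M}\subseteq\{1,\dots,n\}$ be a sample set that is a union of twin samples (pairs $\{i,i+1\}$) and contains $1$ and $n$. Let $A=\mathbf{I}_{\mathcal{M}}$, $y\in\mathbb{R}^{|\mathcal{M}|}$, and let $z\in\mathbb{R}^n$ satisfy $Az=y$. Then $z$ is optimal for $\min_{z'\in\mathbb{R}^n}\|Dz'\|_1$ subject to $Az'=y$ if and only if $z$ is sign consistent (with respect to $\mathcal{M}$).
   Context: $D\in\mathbb{R}^{(n-2)\times n}$ is the second-order difference operator, $(Dz)_k=z_k-2z_{k+1}+z_{k+2}$. $\mathbf{I}_{\mathcal{M}}$ consists of the rows of the identity indexed by $\mathcal{M}$, so $Az=z_{\mathcal{M}}$. A twin sample is a pair of consecutive indices $(i,i+1)$, $i\in\{1,\dots,n-1\}$. For $k\in\{2,\dots,n-1\}$ let $s_k=\mathrm{sign}(z_{k-1}-2z_k+z_{k+1})$ (with $\mathrm{sign}(0)=0$). A profile $z$ is sign consistent (with respect to $\mathcal{M}$) if for any two consecutive samples $i<j$ in $\mathcal{M}$ (no element of $\mathcal{M}$ strictly between them) one of the following holds: (i) no sign change: for all $k,h$ with $i\le k,h\le j$ (for which $s_k,s_h$ are defined), if $s_k\ne0$ and $s_h\ne0$ then $s_k=s_h$; (ii) sign change only at the boundary: $s_k=0$ for every $k$ with $i<k<j$. *)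

(* Indices are 0-based ordinals 'I_n: paper index p <-> ordinal p-1. *)
From HB Require Import structures.
From mathcomp Require Import all_boot all_order all_algebra.
Set Implicit Arguments. Unset Strict Implicit. Unset Printing Implicit Defensive.
Import Order.TTheory GRing.Theory Num.Theory.
Local Open Scope ring_scope.

Section Defs.
Variables (R : realFieldType) (n : nat).

Definition diff2 : 'M[R]_(n - 2, n) :=
  \matrix_(k < n - 2, j < n)
    (if val j == val k then 1
     else if val j == (val k).+1 then -2
     else if val j == (val k).+2 then 1 else 0).

(* selection matrix I_M : rows of the identity indexed by M (in increasing order) *)
Definition selmx (M : {set 'I_n}) : 'M[R]_(#|M|, n) :=
  \matrix_(i < #|M|, j < n) (enum_val i == j)%:R.

Definition l1norm m (v : 'cV[R]_m) : R := \sum_(i < m) `|v i 0|.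

(* entry of z at a natural index (0 outside the range) *)
Definition zat (z : 'cV[R]_n) (m : nat) : R :=
  match @insub nat (fun m => m < n)%N _ m with
  | Some i => z i 0 | None => 0 end.

(* s_k = sign(z_{k-1} - 2 z_k + z_{k+1}), meaningful for interior k (0 < k < n-1) *)
Definition s2 (z : 'cV[R]_n) (k : nat) : R :=
  Num.sg (zat z k.-1 - 2 * zat z k + zat z k.+1).

Definition interior (k : nat) : bool := (0 < k < n.-1)%N.

Definition consecutive (M : {set 'I_n}) (i j : 'I_n) : Prop :=
  [/\ i \in M, j \in M, (val i < val j)%N &
      forall m : 'I_n, m \in M -> ~ (val i < val m < val j)%N].

Definition sign_consistent (M : {set 'I_n}) (z : 'cV[R]_n) : Prop :=
  forall i j : 'I_n, consecutive M i j ->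
    (forall k h : nat, (val i <= k <= val j)%N -> (val i <= h <= val j)%N ->
        interior k -> interior h -> s2 z k != 0 -> s2 z h != 0 -> s2 z k = s2 z h)
    \/ (forall k : nat, (val i < k < val j)%N -> s2 z k = 0).

Definition twin_union (M : {set 'I_n}) : Prop :=
  forall i, i \in M -> exists2 j, j \in M & (val j = (val i).+1 \/ val i = (val j).+1).

Definition l1_optimal m (A : 'M[R]_(m, n)) (y : 'cV[R]_m) (z : 'cV[R]_n) : Prop :=
  A *m z = y /\ forall z' : 'cV[R]_n, A *m z' = y -> l1norm (diff2 *m z) <= l1norm (diff2 *m z').

End Defs.

(* Sufficiency is an explicit dual certificate.  If z is sign consistent, there
   is a W with |W k| <= 1 and W k (Dz)_k = |(Dz)_k| whose second difference
   vanishes at every unsampled index; summation by parts then gives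
   ||Dz'||_1 >= <W, Dz'> = <W, Dz> = ||Dz||_1 for every z' that agrees with z on
   the samples.  On each gap of length at least two between consecutive samples,
   W is the common sign of the gap when some interior sign is nonzero (sign
   consistency makes it well defined), and otherwise interpolates linearly
   between the signs at the two endpoints; elsewhere W k = s_k.  Since the
   samples come in twins, such gaps are pairwise disjoint and stay off the two
   boundary indices.

   Necessity: if a gap has a nonzero interior sign s_m and the opposite sign at
   some x, adding a small multiple of a hat function with kinks at m, x and a
   neighbour of m changes no sample, but lowers |(Dz)_m| and |(Dz)_x| by more
   than it can raise the third term. *)

From mathcomp Require Import all_boot all_order all_algebra.
From mathcomp Require Import zify ring lra.
Import Order.TTheory GRing.Theory Num.Theory.
Set Implicit Arguments. Unset Strict Implicit. Unset Printing Implicit Defensive.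
Local Open Scope ring_scope.

Section RealSequences.
Variable R : realFieldType.
Implicit Types (a b d e : R) (f v W : nat -> R).

Definition delta2 f (k : nat) : R := f k.-1 - 2 * f k + f k.+1.

Lemma sum_mul_delta2 (N : nat) W v : W 0%N = 0 -> W N.+1 = 0 -> W N.+2 = 0 ->
  \sum_(0 <= r < N) W r.+1 * delta2 v r.+1 = \sum_(0 <= k < N.+2) v k * delta2 W k.
Proof.
move=> W0 W1 W2.
have shiftl : \sum_(0 <= k < N.+2) v k * W k.+1 = \sum_(0 <= r < N) W r.+1 * v r.
  by rewrite !big_nat_recr //= W1 W2 !mulr0 !addr0; apply: eq_bigr => r _; rewrite mulrC.
have shift0 : \sum_(0 <= k < N.+2) v k * W k = \sum_(0 <= r < N) W r.+1 * v r.+1.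
  rewrite big_nat_recr //= W1 mulr0 addr0 big_nat_recl // W0 mulr0 add0r.
  by apply: eq_bigr => r _; rewrite mulrC.
have shiftr : \sum_(0 <= k < N.+2) v k * W k.-1 = \sum_(0 <= r < N) W r.+1 * v r.+2.
  by rewrite !big_nat_recl //= W0 !mulr0 !add0r; apply: eq_bigr => r _; rewrite mulrC.
transitivity (\sum_(0 <= k < N.+2) v k * W k.-1 - 2 * \sum_(0 <= k < N.+2) v k * W k
              + \sum_(0 <= k < N.+2) v k * W k.+1).
  rewrite shiftl shift0 shiftr mulr_sumr -sumrB -big_split /=.
  by apply: eq_bigr => r _; rewrite /delta2 /=; ring.
by rewrite mulr_sumr -sumrB -big_split /=; apply: eq_bigr => k _; rewrite /delta2; ring.
Qed.

Lemma sum_indicator_succ (N q : nat) :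
  \sum_(0 <= r < N) ((r.+1 == q)%:R : R) = (0 < q <= N)%N%:R.
Proof.
elim: N => [|N IH]; first by rewrite big_nil; case: q.
by rewrite big_nat_recr //= IH -natrD; congr (_%:R); lia.
Qed.

Definition interp (i j : nat) a b (k : nat) : R :=
  a + (b - a) * ((k - i)%:R / (j - i)%:R).

Lemma interp_left i j a b : interp i j a b i = a.
Proof. by rewrite /interp subnn mul0r mulr0 addr0. Qed.

Lemma interp_right i j a b : (i < j)%N -> interp i j a b j = b.
Proof. by move=> ij; rewrite /interp divff ?pnatr_eq0 -?lt0n ?subn_gt0 //; ring. Qed.

Lemma interp_delta2 i j a b k : (i < k)%N -> delta2 (interp i j a b) k = 0.
Proof.
move=> ik; rewrite /delta2 /interp.
have -> : (k.+1 - i = (k - i).+1)%N by lia.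
have -> : (k - i = (k.-1 - i).+1)%N by lia.
by rewrite -!natr1; ring.
Qed.

Lemma interp_norm_le1 i j a b k : `|a| <= 1 -> `|b| <= 1 -> (i < j)%N ->
  (i <= k <= j)%N -> `|interp i j a b k| <= 1.
Proof.
move=> a1 b1 ij ikj.
have [t [t0 t1 ->]] : exists t, [/\ 0 <= t, t <= 1 & interp i j a b k = (1 - t) * a + t * b].
  exists ((k - i)%:R / (j - i)%:R); split; last by rewrite /interp; ring.
    by rewrite divr_ge0 ?ler0n.
  by rewrite ler_pdivrMr ?mul1r ?ler_nat ?ltr0n; lia.
have t0' : 0 <= 1 - t by rewrite subr_ge0.
rewrite (le_trans (ler_normD _ _)) // !normrM (ger0_norm t0) (ger0_norm t0').
have : (1 - t) * `|a| <= 1 - t by rewrite ler_piMr.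
have : t * `|b| <= t by rewrite ler_piMr.
lra.
Qed.

Lemma sg_neq_opp d e : d != 0 -> e != 0 -> Num.sg d != Num.sg e -> Num.sg d = - Num.sg e.
Proof.
case: (ltrgt0P d) => [d0|d0|->]; case: (ltrgt0P e) => [e0|e0|->]; rewrite ?eqxx //;
  by rewrite ?(gtr0_sg d0) ?(ltr0_sg d0) ?(gtr0_sg e0) ?(ltr0_sg e0) ?opprK ?eqxx.
Qed.

Lemma normD_sg d e : `|e| <= `|d| -> `|d + e| = `|d| + Num.sg d * e.
Proof.
have [->|d0 ed] := eqVneq d 0.
  by rewrite normr0 normr_le0 => /eqP ->; rewrite !(addr0, normr0, mul0r, sgr0).
have sd2 : Num.sg d * Num.sg d = 1 by rewrite -expr2 sqr_sg d0.
have -> : d + e = Num.sg d * (`|d| + Num.sg d * e) by rewrite mulrDr mulrA sd2 mul1r -numEsg.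
rewrite normrM normr_sg d0 mul1r ger0_norm //.
have : - (Num.sg d * e) <= `|e|.
  by rewrite (le_trans (ler_norm _)) // normrN normrM normr_sg d0 mul1r.
lra.
Qed.

Lemma normr_sg_le1 (x : R) : `|Num.sg x| <= 1.
Proof. by rewrite normr_sg lern1 leq_b1. Qed.

End RealSequences.

Section L1Descent.
Variables (R : realFieldType) (N : nat) (d : nat -> R) (b x o : nat) (wx wo : R).
Hypotheses (wx_gt0 : 0 < wx) (wo_ge0 : 0 <= wo).
Hypotheses (bx : b != x) (bo : b != o) (xo : x != o).
Hypotheses (b_in : (0 < b <= N)%N) (x_in : (0 < x <= N)%N).
Hypotheses (db : d b != 0) (dx : Num.sg (d x) = - Num.sg (d b)).

Definition three_point (k : nat) : R :=
  wx * (k == x)%:R + wo * (k == o)%:R - (wx + wo) * (k == b)%:R.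

Lemma l1_descent : exists2 t : R, 0 < t &
  \sum_(0 <= r < N) `|d r.+1 + t * Num.sg (d b) * three_point r.+1|
  < \sum_(0 <= r < N) `|d r.+1|.
Proof.
set s := Num.sg (d b).
have s2 : s * s = 1 by rewrite -expr2 sqr_sg db.
have ns : `|s| = 1 by rewrite normr_sg db.
have dx0 : d x != 0 by rewrite -sgr_eq0 dx oppr_eq0 sgr_eq0.
have w_gt0 : 0 < wx + wo by rewrite ltr_pwDl.
have [t t_gt0 [tb tx]] : exists2 t : R, 0 < t & t * (wx + wo) <= `|d b| /\ t * wx <= `|d x|.
  have m_gt0 : 0 < Num.min `|d b| `|d x| by rewrite lt_min !normr_gt0 db dx0.
  exists (Num.min `|d b| `|d x| / (wx + wo)); first by rewrite divr_gt0.
  rewrite mulfVK ?gt_eqF // ge_min lexx; split=> //.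
  rewrite -mulrA (le_trans (_ : _ <= Num.min `|d b| `|d x|)) ?ge_min ?lexx ?orbT //.
  by rewrite ler_piMr ?(ltW m_gt0) // mulrC ler_pdivrMr // mul1r lerDl.
have pointwise k : `|d k + t * s * three_point k|
    <= `|d k| + t * (wo * (k == o)%:R - (wx + wo) * (k == b)%:R - wx * (k == x)%:R).
  rewrite /three_point; have [->|kb] := eqVneq k b.
    rewrite (negbTE bx) (negbTE bo).
    have -> : t * s * (wx * 0 + wo * 0 - (wx + wo) * 1) = - (s * (t * (wx + wo))) by ring.
    have tw_ge0 := mulr_ge0 (ltW t_gt0) (ltW w_gt0).
    rewrite normD_sg; last by rewrite normrN normrM ns mul1r ger0_norm.
    by rewrite -/s mulrN mulrA s2 mul1r /= mulr0n mulr1n; lra.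
  have [->|kx] := eqVneq k x.
    rewrite (negbTE xo).
    have -> : t * s * (wx * 1 + wo * 0 - (wx + wo) * 0) = - (Num.sg (d x) * (t * wx)).
      by rewrite dx -/s; ring.
    have twx_ge0 := mulr_ge0 (ltW t_gt0) (ltW wx_gt0).
    rewrite normD_sg; last by rewrite normrN normrM normr_sg dx0 mul1r ger0_norm.
    by rewrite mulrN mulrA -expr2 sqr_sg dx0 mul1r /= mulr0n mulr1n; lra.
  rewrite /= !mulr0n !mulr0 !subr0 add0r (le_trans (ler_normD _ _)) // lerD2l.
  by rewrite !normrM ns mulr1 (gtr0_norm t_gt0) (ger0_norm wo_ge0) normr_nat.
exists t => //; rewrite (le_lt_trans (ler_sum _ (fun r _ => pointwise r.+1))) //.
rewrite big_split /= -mulr_sumr !sumrB -!mulr_sumr !sum_indicator_succ b_in x_in gtrDl.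
have o_le1 : wo * (0 < o <= N)%N%:R <= wo by rewrite ler_piMr // lern1 leq_b1.
by rewrite pmulr_rlt0 // /= !mulr1n; move: wx_gt0; lra.
Qed.

End L1Descent.

Section Tent.
Variable R : realFieldType.

(* By truncated subtraction, [(k - p)%:R] is the ramp max(k - p, 0), and [tent a b c]
   is the hat function with kinks at a < b < c, vanishing outside (a, c). *)
Lemma ramp_delta2 (p m : nat) : delta2 (fun k => (k - p)%:R) m = (m == p)%:R :> R.
Proof.
rewrite /delta2; case: (ltngtP m p) => [mp|pm|<-].
- have [-> -> ->] : [/\ m.-1 - p = 0, m - p = 0 & m.+1 - p = 0]%N by split; lia.
  by rewrite mulr0 subrr addr0.
- have -> : (m.+1 - p = (m - p).+1)%N by lia.
  have -> : (m - p = (m.-1 - p).+1)%N by lia.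
  by rewrite -!natr1 /=; ring.
- have [-> -> ->] : [/\ m.-1 - m = 0, m - m = 0 & m.+1 - m = 1]%N by split; lia.
  by rewrite mulr0 subrr add0r.
Qed.

Definition tent (a b c m : nat) : R :=
  (c - b)%:R * (m - a)%:R - (c - a)%:R * (m - b)%:R + (b - a)%:R * (m - c)%:R.

Lemma tent_delta2 a b c m : delta2 (tent a b c) m =
  (c - b)%:R * (m == a)%:R - (c - a)%:R * (m == b)%:R + (b - a)%:R * (m == c)%:R.
Proof. by rewrite -!ramp_delta2 /delta2 /tent; ring. Qed.

Lemma tent_out a b c m : (a < b < c)%N -> (m <= a)%N || (c <= m)%N -> tent a b c m = 0.
Proof.
move=> abc /orP[ma|cm]; rewrite /tent.
  have [-> -> ->] : [/\ m - a = 0, m - b = 0 & m - c = 0]%N by split; lia.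
  by rewrite !mulr0 subrr addr0.
by rewrite !natrB; [ring | lia..].
Qed.

End Tent.

Section SecondDifference.
Variables (R : realFieldType) (n : nat).
Implicit Types (z : 'cV[R]_n).


Lemma zatE z (i : 'I_n) : zat z i = z i 0.
Proof. by rewrite /zat; case: insubP => [u _ /val_inj -> //|]; rewrite ltn_ord. Qed.

Lemma zat_out z m : (n <= m)%N -> zat z m = 0.
Proof. by move=> nm; rewrite /zat; case: insubP => [u um _|//]; lia. Qed.

Lemma sum_indicator_mul z m : (m < n)%N ->
  \sum_(j < n) ((val j == m)%:R * z j 0) = zat z m.
Proof.
move=> mn; rewrite (bigD1 (Ordinal mn)) //= eqxx mul1r -(zatE z (Ordinal mn)).
rewrite big1 ?addr0 // => j jm; suff /negbTE -> : val j != m by rewrite mul0r.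
by apply: contra jm => /eqP jmE; apply/eqP/val_inj.
Qed.

Lemma diff2_mulE z (r : 'I_(n - 2)) : (diff2 R n *m z) r 0 = delta2 (zat z) r.+1.
Proof.
have entryE (j : 'I_n) : diff2 R n r j =
    (val j == val r)%:R - 2 * (val j == (val r).+1)%:R + (val j == (val r).+2)%:R.
  rewrite mxE; move: (val j) (val r) => a b.
  by case: (a == b) / eqP; case: (a == b.+1) / eqP; case: (a == b.+2) / eqP => /= *;
    (lia || ring).
rewrite mxE (eq_bigr _ (fun j _ => congr1 (fun w => w * z j 0) (entryE j))).
under eq_bigr do rewrite mulrDl mulrBl -mulrA.
rewrite big_split sumrB /= -mulr_sumr !sum_indicator_mul //; have := ltn_ord r; lia.
Qed.

Lemma l1norm_diff2 z : l1norm (diff2 R n *m z) = \sum_(0 <= r < n - 2) `|delta2 (zat z) r.+1|.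
Proof. by rewrite /l1norm big_mkord; apply: eq_bigr => r _; rewrite diff2_mulE. Qed.

Lemma s2_eq0 z k : (s2 z k == 0) = (delta2 (zat z) k == 0).
Proof. exact: sgr_eq0. Qed.

Lemma s2_mul_delta2 z k : s2 z k * delta2 (zat z) k = `|delta2 (zat z) k|.
Proof. by rewrite normrEsg. Qed.

End SecondDifference.

Section Samples.
Variables (n : nat) (M : {set 'I_n}).

Definition samples : seq nat := [seq val i | i <- enum M].

Lemma mem_samples (i : 'I_n) : (val i \in samples) = (i \in M).
Proof. by rewrite (mem_map val_inj) mem_enum. Qed.

Lemma samplesP k : k \in samples -> exists2 i : 'I_n, i \in M & val i = k.
Proof. by case/mapP => i; rewrite mem_enum => Mi ->; exists i. Qed.

Lemma samples_lt k : k \in samples -> (k < n)%N.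
Proof. by case/samplesP => i _ <-; apply: ltn_ord. Qed.

Definition gap (i j : nat) : bool :=
  [&& i \in samples, j \in samples, (i < j)%N &
      all (fun m => m \notin samples) (index_iota i.+1 j)].

Lemma gapP i j : reflect
  [/\ i \in samples, j \in samples, (i < j)%N & forall m, (i < m < j)%N -> m \notin samples]
  (gap i j).
Proof.
apply: (iffP and4P) => -[Si Sj ij free]; split=> //.
  by move=> m im; apply: (allP free); rewrite mem_index_iota.
by apply/allP => m; rewrite mem_index_iota; apply: free.
Qed.

Lemma consecutive_gap (i j : 'I_n) : consecutive M i j <-> gap i j.
Proof.
split=> [[Mi Mj ij free]|/gapP[Si Sj ij free]].
  apply/gapP; split; rewrite ?mem_samples // => m im.
  by apply/negP => /samplesP[k Mk km]; apply: (free k Mk); rewrite km.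
by split; rewrite -?mem_samples // => m Mm /free; rewrite mem_samples Mm.
Qed.

Lemma gap_around m : 0%N \in samples -> n.-1 \in samples -> (m < n)%N ->
  m \notin samples -> exists i j, gap i j /\ (i < m < j)%N.
Proof.
move=> S0 Sn mn Sm.
have below : exists i, (i \in samples) && (i <= m)%N by exists 0%N; rewrite S0.
have above : exists j, (j \in samples) && (m <= j)%N by exists n.-1; rewrite Sn; lia.
have bound i : (i \in samples) && (i <= m)%N -> (i <= m)%N by case/andP.
case: (ex_maxnP below bound) => i /andP[Si im] imax.
case: (ex_minnP above) => j /andP[Sj mj] jmin.
have neq_m k : k \in samples -> k != m by apply: contraTneq => ->.
have imj : (i < m < j)%N by rewrite !ltn_neqAle im mj neq_m // eq_sym neq_m.
exists i, j; split=> //; apply/gapP; split=> // [|k ikj]; first lia.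
apply/negP => Sk; case: (leqP k m) => km.
  by have := imax k; rewrite Sk km => /(_ isT); lia.
by have := jmin k; rewrite Sk (ltnW km) => /(_ isT); lia.
Qed.

Lemma gap_disjoint i j i' j' : gap i j -> gap i' j' -> (i < i')%N -> (j <= i')%N.
Proof.
case/gapP=> _ _ _ free /gapP[Si' _ _ _] ii'.
by rewrite leqNgt; apply: contraL Si' => i'j; apply: free; apply/andP.
Qed.

Lemma gap_functional i j j' : gap i j -> gap i j' -> j = j'.
Proof.
move=> /gapP[_ Sj ij free] /gapP[_ Sj' ij' free'].
apply/eqP; rewrite eqn_leq; apply/andP; split; rewrite leqNgt.
  by apply: contraL Sj' => j'j; apply: free; apply/andP.
by apply: contraL Sj => jj'; apply: free'; apply/andP.
Qed.

End Samples.

Section TwinSamples.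
Variables (n : nat) (M : {set 'I_n}).
Hypothesis twinM : twin_union M.
Local Notation samples := (samples M).
Local Notation gap := (gap M).

Lemma twin_samples k : k \in samples ->
  (k.+1 \in samples) || (0 < k)%N && (k.-1 \in samples).
Proof.
case/samplesP=> i Mi <-; have [j Mj [<-|->]] := twinM Mi; first by rewrite mem_samples Mj.
by rewrite /= mem_samples Mj orbT.
Qed.

Definition long_gap i j := gap i j && (i.+1 < j)%N.

Lemma long_gap_interior i j k : long_gap i j -> (i <= k <= j)%N -> interior n k.
Proof.
case/andP=> /gapP[Si Sj ij free] long ikj.
have /negbTE Si1 : i.+1 \notin samples by apply: free; lia.
have /negbTE Sj1 : j.-1 \notin samples by apply: free; lia.
have := twin_samples Si; rewrite Si1 /= => /andP[i0 _].
have := twin_samples Sj; rewrite Sj1 andbF orbF => /samples_lt jn.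
by rewrite /interior; lia.
Qed.

Lemma long_gap_uniq i j i' j' k : long_gap i j -> long_gap i' j' ->
  (i <= k <= j)%N -> (i' <= k <= j')%N -> i = i' /\ j = j'.
Proof.
wlog ii' : i j i' j' / (i <= i')%N.
  move=> wlog g g' ikj ikj'; case: (leqP i i') => [ii'|/ltnW i'i].
    exact: wlog g g' ikj ikj'.
  by have [-> ->] := wlog _ _ _ _ i'i g' g ikj' ikj.
move=> /andP[g long] /andP[g' long'] ikj ikj'.
case: (ltngtP i i') ii' => // [ii' _|ii' _]; last by subst i'; rewrite (gap_functional g g').
have ji' := gap_disjoint g g' ii'; have kE : k = j by lia.
case/gapP: g => _ Sj _ free; case/gapP: g' => _ _ _ free'.
have := twin_samples Sj; rewrite (negbTE (free j.-1 _)); last by lia.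
by rewrite (negbTE (free' j.+1 _)) ?andbF //; lia.
Qed.

End TwinSamples.

Lemma selmx_mul_eq (R : realFieldType) n (M : {set 'I_n}) (z z' : 'cV[R]_n) :
  selmx R M *m z' = selmx R M *m z -> forall i, i \in M -> z' i 0 = z i 0.
Proof.
move=> E i Mi; have := congr1 (fun v : 'cV[R]_#|M| => v (enum_rank_in Mi i) 0) E.
suff selE (w : 'cV[R]_n) : (selmx R M *m w) (enum_rank_in Mi i) 0 = w i 0 by rewrite !selE.
rewrite mxE (bigD1 i) //= !mxE enum_rankK_in // eqxx mul1r big1 ?addr0 // => j ji.
by rewrite mxE enum_rankK_in // eq_sym (negbTE ji) mul0r.
Qed.

Section TentPerturbation.
Variables (R : realFieldType) (n : nat) (M : {set 'I_n}) (z : 'cV[R]_n) (a b c : nat).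
Hypotheses (abc : (a < b < c)%N) (cn : (c < n)%N).
Hypothesis free : forall m, (a < m < c)%N -> m \notin samples M.

Definition tent_vec (u : R) : 'cV[R]_n := \col_(i < n) (u * tent R a b c i).

Lemma selmx_tent_vec u : selmx R M *m tent_vec u = 0.
Proof.
apply/matrixP => r k; rewrite !mxE; apply: big1 => j _; rewrite !mxE.
have [<-|_] := eqVneq (enum_val r) j; last by rewrite mul0r.
rewrite tent_out ?mulr0 //; apply: contraT => /norP[aj jc].
have /free : (a < enum_val r < c)%N by lia.
by rewrite mem_samples enum_valP.
Qed.

Lemma delta2_add_tent u m :
  delta2 (zat (z + tent_vec u)) m = delta2 (zat z) m + u * delta2 (tent R a b c) m.
Proof.
suff zatD k : zat (z + tent_vec u) k = zat z k + u * tent R a b c k by rewrite /delta2 !zatD; ring.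
have [kn|nk] := ltnP k n; first by rewrite -[k]/(nat_of_ord (Ordinal kn)) !zatE !mxE.
by rewrite !zat_out // tent_out ?mulr0 ?addr0 // (leq_trans (ltnW cn)) ?orbT.
Qed.

Lemma tent_not_optimal x : interior n b -> interior n x -> (x == a) || (x == c) ->
  s2 z b != 0 -> s2 z x != 0 -> s2 z x != s2 z b ->
  ~ l1_optimal (selmx R M) (selmx R M *m z) z.
Proof.
move=> ib ix xac sb sx sxb [_ opt].
set d := delta2 (zat z).
have db : d b != 0 by rewrite -s2_eq0.
have dx : Num.sg (d x) = - Num.sg (d b) by apply: sg_neq_opp; rewrite -?s2_eq0.
have [o [wx [wo [wx_gt0 wo_ge0 [bx bo xo] tentE]]]] : exists o (wx wo : R),
    [/\ 0 < wx, 0 <= wo, [/\ b != x, b != o & x != o] &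
        forall P, delta2 (tent R a b c) P = three_point b x o wx wo P].
  have cabE : (c - a)%:R = (c - b)%:R + (b - a)%:R :> R by rewrite -natrD; congr _%:R; lia.
  case/orP: xac => /eqP ->.
    exists c, (c - b)%:R, (b - a)%:R; split=> [||| P]; rewrite ?ltr0n ?ler0n //.
    - by rewrite subn_gt0; lia.
    - by split; lia.
    - by rewrite tent_delta2 /three_point cabE; ring.
  exists a, (b - a)%:R, (c - b)%:R; split=> [||| P]; rewrite ?ltr0n ?ler0n //.
  - by rewrite subn_gt0; lia.
  - by split; lia.
  - by rewrite tent_delta2 /three_point cabE; ring.
have inner k : interior n k -> (0 < k <= n - 2)%N by rewrite /interior; lia.
have [t t_gt0 descent] := l1_descent wx_gt0 wo_ge0 bx bo xo (inner _ ib) (inner _ ix) db dx.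
have := opt (z + tent_vec (t * Num.sg (d b))).
rewrite mulmxDr selmx_tent_vec addr0 => /(_ erefl); apply/negP; rewrite -ltNge !l1norm_diff2.
by under eq_bigr do rewrite delta2_add_tent tentE.
Qed.

End TentPerturbation.

Section SignConsistency.
Variables (R : realFieldType) (n : nat) (M : {set 'I_n}).
Implicit Types (z : 'cV[R]_n).

Definition sign_consistent_on z (i j : nat) : Prop :=
  (forall k h : nat, (i <= k <= j)%N -> (i <= h <= j)%N ->
     interior n k -> interior n h -> s2 z k != 0 -> s2 z h != 0 -> s2 z k = s2 z h)
  \/ (forall k : nat, (i < k < j)%N -> s2 z k = 0).

Lemma sign_consistent_gaps z :
  sign_consistent M z <-> forall i j, gap M i j -> sign_consistent_on z i j.
Proof.
split=> [sc i j g | sc i j /consecutive_gap]; last exact: sc.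
case/gapP: (g) => /samplesP[i' _ iE] /samplesP[j' _ jE] _ _.
by rewrite -iE -jE in g *; apply: sc; apply/consecutive_gap.
Qed.

Lemma gap_sign_change_not_optimal z i j m x : gap M i j -> (i < m < j)%N ->
  (i <= x <= j)%N -> interior n x -> s2 z m != 0 -> s2 z x != 0 -> s2 z x != s2 z m ->
  ~ l1_optimal (selmx R M) (selmx R M *m z) z.
Proof.
move=> /gapP[_ /samples_lt jn _ free] imj ixj ix sm sx sxm.
have im : interior n m by rewrite /interior; lia.
case: (ltngtP m x) => [mx|xm|mxE]; last by rewrite mxE eqxx in sxm.
  apply: (@tent_not_optimal _ _ _ _ m.-1 m x) => //; rewrite ?eqxx ?orbT //; try lia.
  by move=> q qmx; apply: free; lia.
apply: (@tent_not_optimal _ _ _ _ x m m.+1) => //; rewrite ?eqxx //; try lia.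
by move=> q qmx; apply: free; lia.
Qed.

Lemma optimal_sign_consistent_on z i j :
  l1_optimal (selmx R M) (selmx R M *m z) z -> gap M i j -> sign_consistent_on z i j.
Proof.
move=> opt g; have /gapP[_ /samples_lt jn _ _] := g.
case: (pickP (fun m : 'I_n => (i < m < j)%N && (s2 z m != 0))) => [m /andP[imj sm] | flat].
  left=> k h ikj ihj ik ih sk sh; apply/eqP; apply: contraT => skh; exfalso.
  have [x [ixj ix sx sxm]] : exists x, [/\ (i <= x <= j)%N, interior n x,
      s2 z x != 0 & s2 z x != s2 z m].
    case: (eqVneq (s2 z k) (s2 z m)) => [skm|]; last by exists k.
    by exists h; split=> //; rewrite -skm eq_sym.
  exact: gap_sign_change_not_optimal g imj ixj ix sm sx sxm opt.
right=> k ikj; have kn : (k < n)%N by lia.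
by have := flat (Ordinal kn); rewrite /= ikj /= => /negbFE/eqP.
Qed.

End SignConsistency.

Section DualCertificate.
Variables (R : realFieldType) (n : nat) (M : {set 'I_n}) (z z' : 'cV[R]_n) (W : nat -> R).
Hypothesis W_out : forall k, ~~ interior n k -> W k = 0.
Hypothesis W_le1 : forall k, `|W k| <= 1.
Hypothesis W_sg : forall k, interior n k -> W k * delta2 (zat z) k = `|delta2 (zat z) k|.
Hypothesis W_free : forall m, (m < n)%N -> m \notin samples M -> delta2 W m = 0.
Hypothesis agree : forall i, i \in M -> z' i 0 = z i 0.

Lemma dual_certificate_le : l1norm (diff2 R n *m z) <= l1norm (diff2 R n *m z').
Proof.
rewrite !l1norm_diff2; pose v k := zat z k - zat z' k.
have [W0 W1 W2] : [/\ W 0 = 0, W (n - 2).+1 = 0 & W (n - 2).+2 = 0].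
  by split; apply: W_out; rewrite /interior; lia.
have orth : \sum_(0 <= r < n - 2) W r.+1 * delta2 v r.+1 = 0.
  rewrite (sum_mul_delta2 _ W0 W1 W2); apply: big1 => k _.
  have [kn|nk] := ltnP k n; last by rewrite /v !zat_out // subrr mul0r.
  case Sk : (k \in samples M); last by rewrite W_free ?Sk // mulr0.
  by case/samplesP: Sk => i Mi <-; rewrite /v !zatE agree // subrr mul0r.
have -> : \sum_(0 <= r < n - 2) `|delta2 (zat z) r.+1| =
    \sum_(0 <= r < n - 2) W r.+1 * delta2 (zat z') r.+1
    + \sum_(0 <= r < n - 2) W r.+1 * delta2 v r.+1.
  rewrite -big_split big_seq [RHS]big_seq; apply: eq_bigr => r.
  rewrite mem_index_iota => rn; rewrite -W_sg /interior; last by lia.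
  by rewrite /delta2 /v /=; ring.
rewrite orth addr0 ler_sum // => r _.
by rewrite (le_trans (ler_norm _)) // normrM ler_piMl.
Qed.

End DualCertificate.

Section Certificate.
Variables (R : realFieldType) (n : nat) (M : {set 'I_n}) (z : 'cV[R]_n).
Hypothesis twinM : twin_union M.
Local Notation samples := (samples M).
Local Notation long_gap := (long_gap M).

Definition gap_sign (i j : nat) : option 'I_n :=
  [pick k : 'I_n | (i < k < j)%N && (s2 z k != 0)].

Definition gap_cert (i j k : nat) : R :=
  if gap_sign i j is Some m then s2 z m else interp i j (s2 z i) (s2 z j) k.

Definition long_gap_around (k : nat) : pred ('I_n * 'I_n) :=
  fun p => long_gap p.1 p.2 && (p.1 <= k <= p.2)%N.

Definition cert (k : nat) : R :=
  if ~~ interior n k then 0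
  else if pick (long_gap_around k) is Some p then gap_cert p.1 p.2 k else s2 z k.

Lemma gap_cert_le1 i j k : (i < j)%N -> (i <= k <= j)%N -> `|gap_cert i j k| <= 1.
Proof.
by rewrite /gap_cert; case: gap_sign => [m|] *; rewrite ?interp_norm_le1 ?normr_sg_le1.
Qed.

Lemma gap_cert_delta2 i j k : (i < k)%N -> delta2 (gap_cert i j) k = 0.
Proof.
rewrite /delta2 /gap_cert; case: gap_sign => [m _|ik]; first by ring.
exact: (interp_delta2 _ _ _ ik).
Qed.

Lemma gap_cert_sg i j k : long_gap i j -> sign_consistent_on z i j -> (i <= k <= j)%N ->
  gap_cert i j k * delta2 (zat z) k = `|delta2 (zat z) k|.
Proof.
move=> lg sc ikj; have [dk0|dk] := eqVneq (delta2 (zat z) k) 0.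
  by rewrite dk0 mulr0 normr0.
have sk : s2 z k != 0 by rewrite s2_eq0.
have int h : (i <= h <= j)%N -> interior n h := long_gap_interior twinM lg.
rewrite /gap_cert /gap_sign; case: pickP => [m /andP[imj sm]|flat].
  case: sc => [same|flat']; last by rewrite flat' ?eqxx in sm.
  by rewrite (same m k) ?s2_mul_delta2 ?int //; lia.
have /orP[/eqP->|/eqP->] : (k == i) || (k == j).
  apply: contraT => /norP[ki kj]; have kn : (k < n)%N.
    by case/andP: lg => /gapP[_ /samples_lt jn _ _] _; lia.
  by have := flat (Ordinal kn); rewrite /= sk andbT; lia.
  by rewrite interp_left s2_mul_delta2.
by rewrite interp_right ?s2_mul_delta2 //; case/andP: lg; lia.
Qed.

Lemma cert_long_gap i j k : long_gap i j -> (i <= k <= j)%N -> cert k = gap_cert i j k.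
Proof.
move=> lg ikj; rewrite /cert (long_gap_interior twinM lg ikj) /=.
case: (pickP (long_gap_around k)).
  by move=> [p q] /= /andP[lpq pkq]; have [-> ->] := long_gap_uniq twinM lpq lg pkq ikj.
move=> none.
have /andP[/gapP[/samples_lt i_n /samples_lt j_n _ _] _] := lg.
by have := none (Ordinal i_n, Ordinal j_n); rewrite /long_gap_around /= lg ikj.
Qed.

Lemma cert_le1 k : `|cert k| <= 1.
Proof.
rewrite /cert; case: (interior n k) => /=; last by rewrite normr0 ler01.
case: (pickP (long_gap_around k)) => [[p q] /andP[/andP[/gapP[_ _ pq _] _] pkq]|_].
  exact: gap_cert_le1.
exact: normr_sg_le1.
Qed.

Hypothesis sc : forall i j, gap M i j -> sign_consistent_on z i j.

Lemma cert_sg k : interior n k -> cert k * delta2 (zat z) k = `|delta2 (zat z) k|.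
Proof.
move=> ik; rewrite /cert ik /=.
case: (pickP (long_gap_around k)) => [[p q] /andP[lpq pkq]|_]; last exact: s2_mul_delta2.
by apply: gap_cert_sg => //; apply: sc; case/andP: lpq.
Qed.

Lemma cert_delta2 m : 0%N \in samples -> n.-1 \in samples -> (m < n)%N ->
  m \notin samples -> delta2 cert m = 0.
Proof.
move=> S0 Sn mn Sm; have [i [j [g imj]]] := gap_around S0 Sn mn Sm.
have lg : long_gap i j by rewrite /long_gap g; lia.
have certE k : (i <= k <= j)%N -> cert k = gap_cert i j k := cert_long_gap lg.
rewrite /delta2 !certE; try lia.
by apply: (gap_cert_delta2 j); lia.
Qed.

End Certificate.

Lemma sign_consistent_optimal (R : realFieldType) n (M : {set 'I_n}) (z z' : 'cV[R]_n) :
  twin_union M -> 0%N \in samples M -> n.-1 \in samples M ->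
  (forall i j, gap M i j -> sign_consistent_on z i j) ->
  selmx R M *m z' = selmx R M *m z -> l1norm (diff2 R n *m z) <= l1norm (diff2 R n *m z').
Proof.
move=> twinM S0 Sn sc E.
apply: (dual_certificate_le (M := M) (W := cert M z)) => [k /negbTE ik|k|k|m mn Sm|i Mi].
- by rewrite /cert ik.
- exact: cert_le1.
- exact: cert_sg.
- exact: (cert_delta2 z twinM S0 Sn mn Sm).
- exact: selmx_mul_eq E i Mi.
Qed.

Theorem theorem1 (R : realFieldType) (n : nat) (M : {set 'I_n})
  (y : 'cV[R]_#|M|) (z : 'cV[R]_n) :
  (3 <= n)%N ->
  twin_union M ->
  (exists2 i : 'I_n, i \in M & val i = 0%N) ->
  (exists2 i : 'I_n, i \in M & val i = n.-1) ->
  selmx R M *m z = y ->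
  (l1_optimal (selmx R M) y z <-> sign_consistent M z).
Proof.
(* the argument does not need [3 <= n] *)
move=> _ twinM [i0 Mi0 i0E] [iN MiN iNE] <-.
have S0 : 0%N \in samples M by rewrite -i0E mem_samples.
have Sn : n.-1 \in samples M by rewrite -iNE mem_samples.
split=> [opt | /sign_consistent_gaps sc].
  by apply/sign_consistent_gaps => i j; apply: optimal_sign_consistent_on.
by split=> // z'; apply: sign_consistent_optimal.
Qed.
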